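(* Let $d\ge 3$ and let $G$ be a group with a faithful self-similar action on $\mathcal{T}_{d-1}$. Then for every $1\le i\le d$, $G$ admits a faithful action on $\mathcal{T}_d$ whose image in $\mathrm{Aut}(\mathcal{T}_d)$ is self-similar and $i$-persistent, and which is finite-state if the action on $\mathcal{T}_{d-1}$ is finite-state, and coarsely diagonal if the action on $\mathcal{T}_{d-1}$ is coarsely diagonal.
   Context: For $m\ge2$, $\mathcal{T}_m$ is the rooted $m$-ary tree with vertex set the finite words over $\{1,\dots,m\}$. Every $f\in\mathrm{Aut}(\mathcal{T}_m)$ has a wreath recursion $f=\rho(f)(f_1,\dots,f_m)$ with $\rho(f)\in S_m$ and $f_j\in\mathrm{Aut}(\mathcal{T}_m)$ determined by $f(jw)=\rho(f)(j)f_j(w)$; the $f_j$ are the level-1 states, and the states of $f$ form the smallest set containing $f$ and closed under taking level-1 states. A subset of $\mathrm{Aut}(\mathcal{T}_m)$ is self-similar if it contains all states of its elements; finite-state if each element has finitely many states. A subgroup $H$ is coarsely diagonal if $(h')^{-1}h$ has finite order for all $h\in H$ and states $h'$ of $h$; $h$ is $i$-persistent if $h_i=h$ in its wreath recursion, and $H$ is $i$-persistent if all its elements are. A group action on a tree is said to have one of these properties if it is faithful and its image in the automorphism group has the property. *)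

From mathcomp Require Import all_boot.
Set Implicit Arguments. Unset Strict Implicit. Unset Printing Implicit Defensive.

(** Vertices of the rooted m-ary tree T_m: finite words over the alphabet
    'I_m (letters 0..m-1 stand for 1..m). *)
Definition word (m : nat) := seq 'I_m.

Definition is_aut (m : nat) (f : word m -> word m) : Prop :=
  [/\ bijective f,
      forall w, size (f w) = size w &
      forall u v, take (size u) (f (u ++ v)) = f u].

(** For v = [:: j] this is the level-1 state f_j of the wreath
    recursion f = rho(f)(f_1,...,f_m), since f(j w) = rho(f)(j) f_j(w).
    The states of f are exactly the maps section f v, v a vertex. *)
Definition section (m : nat) (f : word m -> word m) (v : word m) : word m -> word m :=
  fun w => drop (size v) (f (v ++ w)).

(** Subsets of Aut(T_m), given as predicates (considered up to extensional
    equality of maps). *)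
Definition self_similar (m : nat) (S : (word m -> word m) -> Prop) : Prop :=
  forall f, S f -> forall v : word m, exists f', S f' /\ section f v =1 f'.

Definition finite_state (m : nat) (S : (word m -> word m) -> Prop) : Prop :=
  forall f, S f -> exists (n : nat) (L : nat -> word m -> word m),
    forall v : word m, exists k, k < n /\ section f v =1 L k.

Definition persistent (m : nat) (i : 'I_m) (S : (word m -> word m) -> Prop) : Prop :=
  forall f, S f -> section f [:: i] =1 f.

(** Coarsely diagonal: (h')^{-1} h has finite order for every h in S and
    every state h' of h.  (h')^{-1} is the inverse map of the automorphism h'
    (any left inverse of the bijection h' is its inverse). *)
Definition coarsely_diagonal (m : nat) (S : (word m -> word m) -> Prop) : Prop :=
  forall h, S h -> forall v : word m, exists n, 0 < n /\
    forall g : word m -> word m, cancel (section h v) g ->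
      forall w, iter n (fun x => g (h x)) w = w.

Definition is_group (G : Type) (mul : G -> G -> G) (inv : G -> G) (one : G) : Prop :=
  [/\ forall x y z, mul x (mul y z) = mul (mul x y) z,
      forall x, mul one x = x /\ mul x one = x &
      forall x, mul (inv x) x = one /\ mul x (inv x) = one].

Definition faithful_action (G : Type) (mul : G -> G -> G) (m : nat)
    (act : G -> word m -> word m) : Prop :=
  [/\ forall g, is_aut (act g),
      forall g h, act (mul g h) =1 act g \o act h &
      forall g h, act g =1 act h -> g = h].

Definition image_of (G : Type) (m : nat) (act : G -> word m -> word m) :
    (word m -> word m) -> Prop :=
  fun f => exists g, f =1 act g.

From mathcomp Require Import all_boot.

(** An automorphism f of T_(d-1) induces an automorphism of T_d that leaves
    every occurrence of the letter i in place and lets f act on the subword of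
    the other letters (relabelled by unlift i).  This extension is an injective
    homomorphism Aut(T_(d-1)) -> Aut(T_d); the state of the extension of f at
    a vertex v is the extension of the state of f at the stripped vertex, and
    at the vertex i it is the extension of f itself.  Hence self-similarity,
    finite-stateness and coarse diagonality pass to the extended action, which
    is i-persistent by construction. *)

Set Implicit Arguments. Unset Strict Implicit. Unset Printing Implicit Defensive.

Section States.
Variable m : nat.
Implicit Types (f g : word m -> word m) (u v w : word m).

Lemma eq_section f g v : f =1 g -> section f v =1 section g v.
Proof. by move=> eq_fg w; rewrite /section eq_fg. Qed.

Lemma section_cat f u w : is_aut f -> f (u ++ w) = f u ++ section f u w.
Proof.
by case=> _ _ pre_f; rewrite /section -{1}[f _](cat_take_drop (size u)) pre_f.
Qed.

Lemma size_section f v w : is_aut f -> size (section f v w) = size w.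
Proof. by case=> _ size_f _; rewrite /section size_drop size_f size_cat addKn. Qed.

Lemma section0 f : section f [::] =1 f.
Proof. by move=> w; rewrite /section drop0. Qed.

Lemma bij_section f v : is_aut f -> bijective (section f v).
Proof.
move=> aut_f; have [[g fK gK] size_f pre_f] := aut_f.
pose k t := drop (size v) (g (f v ++ t)).
have g_fv t : g (f v ++ t) = v ++ k t.
  have size_g : size v <= size (g (f v ++ t)).
    by rewrite -[size (g _)]size_f gK size_cat size_f leq_addr.
  rewrite -[LHS](cat_take_drop (size v)); congr (_ ++ _); apply: (can_inj fK).
  have := pre_f (take (size v) (g (f v ++ t))) (drop (size v) (g (f v ++ t))).
  by rewrite cat_take_drop size_takel // gK take_size_cat ?size_f.
exists k => [w | t]; first by rewrite /k -section_cat // fK drop_size_cat.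
by rewrite /section -g_fv gK drop_size_cat ?size_f.
Qed.

End States.

Section Extension.
Variables (n : nat) (i : 'I_n.+1).
Implicit Types (f g : word n -> word n) (s t u : word n) (v w : word n.+1).

Fixpoint strip w : word n :=
  if w is a :: w' then
    if unlift i a is Some b then b :: strip w' else strip w'
  else [::].

Fixpoint fill w s : word n.+1 :=
  if w is a :: w' then
    if unlift i a is Some _ then
      if s is b :: s' then lift i b :: fill w' s' else a :: fill w' [::]
    else a :: fill w' s
  else [::].

Definition extend f w := fill w (f (strip w)).

Lemma strip_cat v w : strip (v ++ w) = strip v ++ strip w.
Proof. by elim: v => //= a v ->; case: (unlift i a). Qed.

Lemma strip_map_lift s : strip (map (lift i) s) = s.
Proof. by elim: s => //= b s ->; rewrite liftK. Qed.

Lemma size_fill w s : size (fill w s) = size w.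
Proof.
elim: w s => //= a w IHw s.
by case: (unlift i a) => [_|]; [case: s => [|b s] |]; rewrite /= IHw.
Qed.

Lemma fill_cat v w s t : size s = size (strip v) ->
  fill (v ++ w) (s ++ t) = fill v s ++ fill w t.
Proof.
elim: v s => [|a v IHv] s /=; first by case: s.
case: (unlift i a) => [b|] size_s; last by rewrite IHv.
by case: s size_s => [|c s] //= [size_s]; rewrite IHv.
Qed.

Lemma strip_fill w s : size s = size (strip w) -> strip (fill w s) = s.
Proof.
elim: w s => [|a w IHw] s /=; first by case: s.
case E: (unlift i a) => [b|] size_s; last by rewrite /= E IHw.
by case: s size_s => [|c s] //= [size_s]; rewrite liftK IHw.
Qed.

Lemma fill_strip w : fill w (strip w) = w.
Proof. by elim: w => //= a w IHw; case: (unliftP i a) => [b -> | ->]; rewrite IHw. Qed.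

Lemma fill_fill w s t : size s = size (strip w) -> size t = size (strip w) ->
  fill (fill w s) t = fill w t.
Proof.
elim: w s t => [|a w IHw] s t //=.
case E: (unlift i a) => [b|] size_s size_t; last by rewrite /= E IHw.
case: s t size_s size_t => [|c s] [|e t] //= [size_s] [size_t].
by rewrite liftK IHw.
Qed.

Lemma fill_map_lift s t : size t = size s -> fill (map (lift i) s) t = map (lift i) t.
Proof. by elim: s t => [|b s IHs] [|c t] //= [size_t]; rewrite liftK IHs. Qed.

Lemma eq_extend f g : f =1 g -> extend f =1 extend g.
Proof. by move=> eq_fg w; rewrite /extend eq_fg. Qed.

Lemma extend_id : extend id =1 id.
Proof. exact: fill_strip. Qed.

Lemma size_extend f w : size (extend f w) = size w.
Proof. exact: size_fill. Qed.

Lemma extend_comp f g :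
    (forall s, size (f s) = size s) -> (forall s, size (g s) = size s) ->
  forall w, extend f (extend g w) = extend (f \o g) w.
Proof.
move=> size_f size_g w; have size_fg s : size (f (g s)) = size s by rewrite size_f.
by rewrite /= /extend strip_fill ?fill_fill ?size_fg ?size_g.
Qed.

Lemma extend_iter f k : (forall s, size (f s) = size s) ->
  iter k (extend f) =1 extend (iter k f).
Proof.
move=> size_f; elim: k => [|k IHk] w /=; first by rewrite extend_id.
have size_fk s : size (iter k f s) = size s.
  by elim: k {IHk} => //= k size_fk; rewrite size_f.
by rewrite IHk (extend_comp size_f size_fk).
Qed.

Lemma extend_cat f v w : is_aut f ->
  extend f (v ++ w) = extend f v ++ extend (section f (strip v)) w.
Proof.
move=> aut_f; rewrite /extend strip_cat section_cat // fill_cat //.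
by case: aut_f => _ ->.
Qed.

Lemma section_extend f v : is_aut f ->
  section (extend f) v =1 extend (section f (strip v)).
Proof. by move=> aut_f w; rewrite /section extend_cat // drop_size_cat ?size_extend. Qed.

Lemma section_extend_i f : is_aut f -> section (extend f) [:: i] =1 extend f.
Proof.
move=> aut_f w; rewrite section_extend //= unlift_none.
exact: eq_extend (section0 f) w.
Qed.

Lemma extend_aut f : is_aut f -> is_aut (extend f).
Proof.
move=> aut_f; have [[g fK gK] size_f _] := aut_f.
have size_g s : size (g s) = size s by rewrite -{2}(gK s) size_f.
split=> [| w | v w].
- by exists (extend g) => w; rewrite extend_comp // -[RHS]extend_id; apply: eq_extend.
- exact: size_extend.
- by rewrite extend_cat // take_size_cat ?size_extend.
Qed.

Lemma extend_inj f g :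
    (forall s, size (f s) = size s) -> (forall s, size (g s) = size s) ->
  extend f =1 extend g -> f =1 g.
Proof.
move=> size_f size_g eq_fg s; have := eq_fg (map (lift i) s).
by rewrite /extend strip_map_lift !fill_map_lift // => /(inj_map (@lift_inj _ i)).
Qed.

Section ExtendAction.
Variables (G : Type) (act : G -> word n -> word n).
Hypothesis act_aut : forall x, is_aut (act x).
Implicit Type h : word n.+1 -> word n.+1.

Definition extend_action x := extend (act x).

Let size_act x s : size (act x s) = size s.
Proof. by case: (act_aut x). Qed.

Let act_in_image x : image_of act (act x).
Proof. by exists x. Qed.

Lemma section_image_extend_action h : image_of extend_action h ->
  exists2 x, h =1 extend_action x &
    forall v, section h v =1 extend (section (act x) (strip v)).
Proof.
case=> x h_x; exists x => // v w.
by rewrite (eq_section _ h_x) section_extend.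
Qed.

Lemma faithful_extend_action (mul : G -> G -> G) :
  faithful_action mul act -> faithful_action mul extend_action.
Proof.
case=> _ act_mul act_inj; split=> [x | x y w | x y eq_xy].
- exact: extend_aut.
- by rewrite /extend_action (eq_extend (act_mul x y)) /= (extend_comp (size_act x)).
- by apply: act_inj; apply: extend_inj eq_xy.
Qed.

Lemma self_similar_extend_action :
  self_similar (image_of act) -> self_similar (image_of extend_action).
Proof.
move=> ss_act h /section_image_extend_action[x _ sec_h] v.
have [f' [[y act_y] sec_x]] := ss_act _ (act_in_image x) (strip v).
exists (extend_action y); split; first by exists y.
by move=> w; rewrite sec_h; apply: eq_extend => s; rewrite sec_x act_y.
Qed.

Lemma persistent_extend_action : persistent i (image_of extend_action).
Proof.
by move=> h [x h_x] w; rewrite (eq_section _ h_x) section_extend_i // h_x.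
Qed.

Lemma finite_state_extend_action :
  finite_state (image_of act) -> finite_state (image_of extend_action).
Proof.
move=> fs_act h /section_image_extend_action[x _ sec_h].
have [N [L states_x]] := fs_act _ (act_in_image x).
exists N, (fun k => extend (L k)) => v.
have [k [lt_kN sec_x]] := states_x (strip v).
by exists k; split=> // w; rewrite sec_h; apply: eq_extend.
Qed.

(** A left inverse of the state [extend s] is [extend k] for the inverse [k]
    of the bijection [s], so the iterates to control are extensions of the
    iterates given by the hypothesis on [act]. *)
Lemma coarsely_diagonal_extend_action :
  coarsely_diagonal (image_of act) -> coarsely_diagonal (image_of extend_action).
Proof.
move=> cd_act h /section_image_extend_action[x h_x sec_h] v.
set s := section (act x) (strip v).
have [N [N_gt0 iter_N]] := cd_act _ (act_in_image x) (strip v).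
have [k sK kK] := bij_section (strip v) (act_aut x).
have size_s t : size (s t) = size t by apply: size_section.
have size_k t : size (k t) = size t by rewrite -{2}(kK t) size_s.
exists N; split=> // g hK w.
have g_k : g =1 extend k.
  move=> y; have s_k : extend s (extend k y) = y.
    by rewrite extend_comp // (@eq_extend _ id kK) extend_id.
  by rewrite -{1}s_k -sec_h hK.
have gh_k : (fun y => g (h y)) =1 extend (k \o act x).
  by move=> y; rewrite g_k h_x extend_comp.
rewrite (eq_iter gh_k) extend_iter => [|t]; last by rewrite /= size_k.
by rewrite (eq_extend (iter_N k sK)) extend_id.
Qed.

End ExtendAction.
End Extension.

Theorem lemma5p3 (d : nat) (hd : 3 <= d)
  (G : Type) (mul : G -> G -> G) (inv : G -> G) (one : G)
  (hG : is_group mul inv one)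
  (act : G -> word d.-1 -> word d.-1)
  (hact : faithful_action mul act)
  (hss : self_similar (image_of act)) :
  forall i : 'I_d, exists act' : G -> word d -> word d,
    [/\ faithful_action mul act',
        self_similar (image_of act'),
        persistent i (image_of act'),
        (finite_state (image_of act) -> finite_state (image_of act')) &
        (coarsely_diagonal (image_of act) -> coarsely_diagonal (image_of act'))].
Proof.
case: d hd act hact hss => [|n] // _ act hact hss i.
have act_aut x : is_aut (act x) by case: hact.
exists (extend_action i act); split.
- exact: faithful_extend_action.
- exact: self_similar_extend_action.
- exact: persistent_extend_action.
- exact: finite_state_extend_action.
- exact: coarsely_diagonal_extend_action.
Qed.
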